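(* Let $n,d$ be positive integers with $d\mid 2n^2$ and $2n^2>d^2$, and let $(a,b,c)=\left(2n+d,\ \tfrac{2n^2}{d}+2n,\ \tfrac{2n^2}{d}+2n+d\right)$ (a DPT). If there exists a prime $p>2$ such that $e_p(d)$ is odd, then $\gcd(a,b,c)>1$, i.e. $(a,b,c)$ is reducible.
   Context: A Diophantine Pythagorean Triangle (DPT) is a triple $(a,b,c)$ of positive integers with $a<b<c$ and $a^2+b^2=c^2$. For a prime $p$, $e_p(d)$ denotes the exponent of $p$ in the prime factorization of $d$. *)

From mathcomp Require Import all_boot.

From mathcomp Require Import all_boot.

Set Implicit Arguments.
Unset Strict Implicit.
Unset Printing Implicit Defensive.

(* For an odd prime p the p-adic valuation of d * (2n^2/d) = 2n^2 is even, so
   if it is odd on d it is odd, hence positive, on the cofactor 2n^2/d as well.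
   Then p divides d, 2n^2/d and (being coprime to 2) n, hence all three of
   2n + d, 2n^2/d + 2n and 2n^2/d + 2n + d. *)

Lemma dvdn_of_odd_logn (p d : nat) : odd (logn p d) -> p %| d.
Proof.
move=> odd_pd; have : 0 < logn p d by case: (logn p d) odd_pd.
by rewrite logn_gt0 mem_primes => /and3P[].
Qed.

Lemma odd_logn_cofactor (p k n m d : nat) :
  prime p -> ~~ (p %| k) -> 0 < m -> 0 < d -> m * d = k * n ^ 2 ->
  odd (logn p d) -> odd (logn p m).
Proof.
move=> p_pr p_ndvd_k m_gt0 d_gt0 def_md odd_pd.
have [k_gt0 n_gt0] : 0 < k /\ 0 < n.
  have : 0 < k * n ^ 2 by rewrite -def_md muln_gt0 m_gt0.
  by rewrite muln_gt0 expn_gt0 orbF => /andP[].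
have logn_md : logn p m + logn p d = (logn p n).*2.
  rewrite -lognM // def_md lognM ?expn_gt0 ?n_gt0 // lognX.
  by rewrite logn_coprime ?prime_coprime // add0n mul2n.
have := congr1 odd logn_md.
by rewrite oddD odd_double odd_pd addbT => /negbFE.
Qed.

Lemma prime_dvd_sq_cofactor (p k n : nat) :
  prime p -> ~~ (p %| k) -> p %| k * n ^ 2 -> p %| n.
Proof.
move=> p_pr p_ndvd_k; rewrite Euclid_dvdM // (negbTE p_ndvd_k) Euclid_dvdX //.
by case/andP.
Qed.

Lemma gcdn_gt1_of_dvd (p a b : nat) :
  prime p -> 0 < a -> p %| a -> p %| b -> 1 < gcdn a b.
Proof.
move=> p_pr a_gt0 p_a p_b; apply: leq_trans (prime_gt1 p_pr) _.
by apply: dvdn_leq; rewrite ?gcdn_gt0 ?a_gt0 ?dvdn_gcd ?p_a.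
Qed.

Theorem lemma6 (n d : nat) :
  0 < n -> 0 < d -> d %| 2 * n ^ 2 -> d ^ 2 < 2 * n ^ 2 ->
  (exists p : nat, [/\ prime p, 2 < p & odd (logn p d)]) ->
  1 < gcdn (gcdn (2 * n + d) (2 * n ^ 2 %/ d + 2 * n))
           (2 * n ^ 2 %/ d + 2 * n + d).
Proof.
move=> n_gt0 d_gt0 d_dvd _ [p [p_pr p_gt2 odd_pd]].
set m := 2 * n ^ 2 %/ d.
have def_md : m * d = 2 * n ^ 2 by rewrite divnK.
have m_gt0 : 0 < m by rewrite divn_gt0 // dvdn_leq // muln_gt0 expn_gt0 n_gt0.
have p_ndvd2 : ~~ (p %| 2) by apply: contraL p_gt2 => /dvdn_leq; rewrite -leqNgt; apply.
have p_d := dvdn_of_odd_logn odd_pd.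
have p_m := dvdn_of_odd_logn (odd_logn_cofactor p_pr p_ndvd2 m_gt0 d_gt0 def_md odd_pd).
have p_n : p %| n.
  by apply: (prime_dvd_sq_cofactor p_pr p_ndvd2); rewrite -def_md dvdn_mull.
have p_2n : p %| 2 * n by rewrite dvdn_mull.
apply: (gcdn_gt1_of_dvd p_pr); rewrite ?gcdn_gt0 ?addn_gt0 ?d_gt0 ?orbT //.
  by rewrite dvdn_gcd !dvdn_add.
by rewrite !dvdn_add.
Qed.
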